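(* Let $D,W,V,K$ be positive integers, $M:=VK$, and let $\mathcal{D}\in\mathbb{R}^{W\times M}$ with $\mathrm{rank}(\mathcal{D})=D$. Let $\mathcal{D}_\square$ be a $D\times D$ submatrix of $\mathcal{D}$ with $\mathrm{rank}(\mathcal{D}_\square)=D$, with row index set $I\subseteq\{1,\dots,W\}$ and column index set $L\subseteq\{1,\dots,M\}$. Fix $\sharp\in\{\mathrm{st},\mathrm{m}\}$, let $\bar\sharp$ denote the other element of $\{\mathrm{st},\mathrm{m}\}$, and let $\theta(1),\dots,\theta(J)$ be index pairs in $\{1,\dots,W\}^{\times2}$ if $\sharp=\mathrm{st}$, resp. in $\{1,\dots,M\}^{\times2}$ if $\sharp=\mathrm{m}$, together with real numbers $c_1,\dots,c_J$. Call $P'=(P'_{\mathrm{st}}\,|\,P'_{\mathrm{m}})$ with $P'_{\mathrm{st}}\in\mathbb{R}^{D\times W}$, $P'_{\mathrm{m}}\in\mathbb{R}^{D\times M}$ compatible if $(P'_{\mathrm{st}})^TP'_{\mathrm{m}}=\mathcal{D}$ and $\bigl((P'_\sharp)^TP'_\sharp\bigr)_{\theta(j)}=c_j$ for all $j=1,\dots,J$. Let $P^{(0)}_{\mathrm{st}}\in\mathbb{R}^{D\times W}$, $P^{(0)}_{\mathrm{m}}\in\mathbb{R}^{D\times M}$ satisfy $(P^{(0)}_{\mathrm{st}})^TP^{(0)}_{\mathrm{m}}=\mathcal{D}$, let $P=(P_{\mathrm{st}}\,|\,P_{\mathrm{m}})$ be compatible, and let $A\in GL(\mathbb{R}^D)$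 satisfy $P_{\mathrm{st}}=A^{-T}P^{(0)}_{\mathrm{st}}$ and $P_{\mathrm{m}}=AP^{(0)}_{\mathrm{m}}$. Let $R^{(0)}_{\mathrm{st}}\in\mathbb{R}^{D\times D}$ be the submatrix of $P^{(0)}_{\mathrm{st}}$ formed by the columns with indices in $I$, and $R^{(0)}_{\mathrm{m}}\in\mathbb{R}^{D\times D}$ the submatrix of $P^{(0)}_{\mathrm{m}}$ formed by the columns with indices in $L$ (so $(R^{(0)}_{\mathrm{st}})^TR^{(0)}_{\mathrm{m}}=\mathcal{D}_\square$). For $j=1,\dots,J$, writing $\theta(j)=(\theta(j)_1,\theta(j)_2)$ and $\vec p_i$ for the $i$-th column of $P^{(0)}_\sharp$, set $$B_j:=\tfrac12\bigl(\vec p_{\theta(j)_1}\vec p_{\theta(j)_2}^{\,T}+\vec p_{\theta(j)_2}\vec p_{\theta(j)_1}^{\,T}\bigr).$$ Then $A^TA$ is uniquely determined (i.e. $A'^TA'=A^TA$ for every $A'\in GL(\mathbb{R}^D)$ such that $(A'^{-T}P^{(0)}_{\mathrm{st}}\,|\,A'P^{(0)}_{\mathrm{m}})$ is compatible) if and only if $$\mathrm{rank}\Bigl(\mathrm{vec}\bigl(R^{(0)}_{\bar\sharp}B_1(R^{(0)}_{\bar\sharp})^T\bigr)\Bigm|\cdots\Bigm|\mathrm{vec}\bigl(R^{(0)}_{\bar\sharp}B_J(R^{(0)}_{\bar\sharp})^T\bigr)\Bigr)=\tfrac12D(D+1).$$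
   Context: For a matrix $X$, $\mathrm{vec}(X)$ denotes the column vector obtained by stacking the columns of $X$ on top of each other. $GL(\mathbb{R}^D)$ is the group of invertible real $D\times D$ matrices, and $A^{-T}=(A^{-1})^T$. *)

From HB Require Import structures.
From mathcomp Require Import all_boot all_order all_algebra.
From mathcomp Require Export reals.
Set Implicit Arguments. Unset Strict Implicit. Unset Printing Implicit Defensive.
Import Order.TTheory GRing.Theory Num.Theory.
Local Open Scope ring_scope.

Inductive sharp := St | Mm.
Definition sharp_bar (s : sharp) : sharp := match s with St => Mm | Mm => St end.

Definition dimS (s : sharp) (W M : nat) : nat :=
  match s with St => W | Mm => M end.

Definition pick_sharp {R : Type} {D W M : nat} (s : sharp)
  (Pst : 'M[R]_(D, W)) (Pm : 'M[R]_(D, M)) : 'M[R]_(D, dimS s W M) :=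
  match s as s0 return 'M[R]_(D, dimS s0 W M) with St => Pst | Mm => Pm end.

Definition pick_sq {R : Type} {D : nat} (s : sharp) (Rst Rm : 'M[R]_D) : 'M[R]_D :=
  match s with St => Rst | Mm => Rm end.

Definition compatible {R : realType} {D W M J : nat} (s : sharp)
  (theta : 'I_J -> 'I_(dimS s W M) * 'I_(dimS s W M)) (c : 'I_J -> R)
  (Dm : 'M[R]_(W, M)) (Pst : 'M[R]_(D, W)) (Pm : 'M[R]_(D, M)) : Prop :=
  Pst^T *m Pm = Dm /\
  forall j : 'I_J,
    ((pick_sharp s Pst Pm)^T *m pick_sharp s Pst Pm) (theta j).1 (theta j).2 = c j.

(* vec X : stacking the columns of X into one column vector *)
Definition vecc {R : Type} {m n : nat} (X : 'M[R]_(m, n)) : 'cV[R]_(n * m) :=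
  (mxvec X^T)^T.

Definition Bmat {R : realType} {D N : nat} (P : 'M[R]_(D, N)) (ab : 'I_N * 'I_N)
  : 'M[R]_D :=
  2^-1 *: (col ab.1 P *m (col ab.2 P)^T + col ab.2 P *m (col ab.1 P)^T).

Definition vecB_matrix {R : realType} {D N J : nat} (Rb : 'M[R]_D)
  (P : 'M[R]_(D, N)) (theta : 'I_J -> 'I_N * 'I_N) : 'M[R]_(D * D, J) :=
  \matrix_(k < D * D, j < J) vecc (Rb *m Bmat P (theta j) *m Rb^T) k 0.
Arguments compatible {R D W M J} s theta c Dm Pst Pm.
Arguments pick_sharp {R D W M} s Pst Pm.
Arguments pick_sq {R D} s Rst Rm.

(* Write P' = Q P^(0)_# with Q = A if # = m and Q = A^-T if # = st. The
   constraints ((P')^T P')_theta(j) = c_j are affine in the Gram matrix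
   Y = Q^T Q, namely tr (B_j Y) = c_j. Every small symmetric perturbation of
   the positive definite Gram matrix of a solution is again the Gram matrix of
   an invertible matrix (Cholesky), so Q^T Q is unique iff no nonzero symmetric
   matrix is orthogonal to all B_j, i.e. iff the B_j span the
   D(D+1)/2-dimensional space of symmetric matrices. This span condition is
   invariant under the congruence by the invertible matrix R^(0)_#bar, and the
   uniqueness of A^-1 A^-T is that of A^T A. *)

From HB Require Import structures.
From mathcomp Require Import all_boot all_order all_algebra.
From mathcomp Require Import reals.
From mathcomp Require Import ring lra.
Set Implicit Arguments.
Unset Strict Implicit.
Unset Printing Implicit Defensive.

Import Order.TTheory GRing.Theory Num.Theory.
Local Open Scope ring_scope.

Section SymmetricBasis.
Variables (F : fieldType) (D : nat).

Definition sym_index : {set 'I_D * 'I_D} := [set p : 'I_D * 'I_D | (p.1 <= p.2)%N].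

Definition sym_unit (p : 'I_D * 'I_D) : 'M[F]_D :=
  \matrix_(k, l) (((k, l) == p) || ((l, k) == p))%:R.

Definition symmx_basis : 'M[F]_(#|sym_index|, D * D) :=
  \matrix_(r < #|sym_index|) mxvec (sym_unit (enum_val r)).

Lemma card_sym_index : #|sym_index| = (D * (D + 1) %/ 2)%N.
Proof.
pose low : {set 'I_D * 'I_D} := [set p : 'I_D * 'I_D | (p.2 <= p.1)%N].
have card_low : #|low| = #|sym_index|.
  have -> : low = [set (p.2, p.1) | p in sym_index].
    apply/setP => [[i j]]; rewrite !inE; apply/idP/imsetP => /=.
      by move=> le_ji; exists (j, i); rewrite ?inE.
    by move=> [[i' j']]; rewrite inE /= => le_ij [-> ->].
  by rewrite card_imset // => [[a b] [c d]] /= [-> ->].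
have card_union : #|[predU sym_index & low]| = (D * D)%N.
  transitivity #|{: 'I_D * 'I_D}|; last by rewrite card_prod card_ord.
  by apply: eq_card => [[i j]]; rewrite !inE /= leq_total.
have card_diag : #|[predI sym_index & low]| = D.
  transitivity #|[set (i, i) | i in 'I_D]|; last first.
    by rewrite card_imset ?card_ord // => a b [].
  apply: eq_card => [[i j]]; rewrite !inE /=; apply/idP/imsetP.
    move=> /andP[le_ij le_ji]; exists i => //; congr pair.
    by apply/val_inj/eqP; rewrite /= eqn_leq le_ij le_ji.
  by move=> [x _ [-> ->]]; rewrite leqnn.
have := cardUI sym_index low; rewrite card_union card_diag card_low => card_UI.
by rewrite mulnDr muln1 card_UI addnn -mul2n mulKn.
Qed.

Lemma sym_unit_tr p : (sym_unit p)^T = sym_unit p.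
Proof. by apply/matrixP => k l; rewrite !mxE orbC. Qed.

Lemma sym_index_swap p q :
  p \in sym_index -> q \in sym_index -> (q.2, q.1) = p -> q = p.
Proof.
case: p => a b; case: q => c d; rewrite !inE /= => le_ab le_cd [eq_da eq_cb].
rewrite -eq_da -eq_cb in le_ab *.
by have /val_inj -> : val c = val d by apply/eqP; rewrite eqn_leq le_ab le_cd.
Qed.

Lemma symmx_basis_free : row_free symmx_basis.
Proof.
apply/row_freeP.
(* Reading off the [(a, b)] entry inverts the basis vector [sym_unit (a, b)]. *)
exists (\matrix_(k, r) (k == mxvec_index (enum_val r).1 (enum_val r).2)%:R).
apply/matrixP => r r'; rewrite !mxE.
rewrite (bigD1 (mxvec_index (enum_val r').1 (enum_val r').2)) //=.
rewrite !mxE eqxx mulr1 big1 => [|k /negbTE k_neq]; last by rewrite !mxE k_neq mulr0.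
rewrite addr0 -/(mxvec _ 0 _) mxvecE mxE -surjective_pairing.
have [<-|ne] := eqVneq r r'; first by rewrite eqxx.
have -> : (enum_val r' == enum_val r) = false.
  by apply/negbTE; apply: contra ne => /eqP/enum_val_inj ->.
case: eqP => // swap.
have /enum_val_inj eq_r := sym_index_swap (enum_valP r) (enum_valP r') swap.
by rewrite eq_r eqxx in ne.
Qed.

Lemma mxrank_symmx_basis : \rank symmx_basis = (D * (D + 1) %/ 2)%N.
Proof. by rewrite (eqP symmx_basis_free) card_sym_index. Qed.

Lemma symmx_basisP (X : 'M[F]_D) : reflect (X^T = X) (mxvec X <= symmx_basis)%MS.
Proof.
apply: (iffP idP) => [/submxP[u eX] | symX].
  have basis_tr : symmx_basis *m lin_mx (@trmx F D D) = symmx_basis.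
    apply/row_matrixP => r.
    by rewrite row_mul rowK mul_vec_lin /= sym_unit_tr.
  apply: (can_inj (@mxvecK _ D D)).
  by rewrite -(mul_vec_lin (@trmx F D D)) eX -mulmxA basis_tr.
apply/submxP; exists (\row_r X (enum_val r).1 (enum_val r).2).
apply/rowP => k; case/mxvec_indexP: k => a b; rewrite mxvecE !mxE.
under eq_bigr do rewrite !mxE -/(mxvec _ 0 _) mxvecE mxE.
wlog le_ab : a b / (a <= b)%N.
  move=> H; have [|lt_ba] := leqP a b; first exact: H.
  rewrite -{1}symX mxE H; last exact: ltnW.
  by apply: eq_bigr => r _; rewrite orbC.
have ab_in : (a, b) \in sym_index by rewrite inE.
rewrite (bigD1 (enum_rank_in ab_in (a, b))) //= enum_rankK_in // eqxx mulr1.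
rewrite big1 ?addr0 // => r ne_r.
have ne_val : enum_val r != (a, b).
  apply: contra ne_r => /eqP val_r.
  by apply/eqP/enum_val_inj; rewrite val_r enum_rankK_in.
rewrite eq_sym (negbTE ne_val) /=; case: eqP => [swap|_]; last by rewrite mulr0.
have swap' : ((enum_val r).2, (enum_val r).1) = (a, b) by rewrite -swap.
by move: ne_val; rewrite (sym_index_swap ab_in (enum_valP r) swap') eqxx.
Qed.

End SymmetricBasis.

Lemma mxvec_dot_trace (F : comNzRingType) m n (A B : 'M[F]_(m, n)) :
  (mxvec A *m (mxvec B)^T) 0 0 = \tr (A *m B^T).
Proof.
rewrite mxE (reindex _ (curry_mxvec_bij m n)) /= /mxtrace.
under [RHS]eq_bigr do rewrite mxE.
rewrite pair_bigA /=; apply: eq_bigr => [[i j]] _ /=.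
by rewrite !mxE -!/(mxvec _ 0 _) !mxvecE.
Qed.

Section SymmetricSpan.
Variable R : realFieldType.

Lemma rV_dot_self_eq0 n (z : 'rV[R]_n) : (z *m z^T) 0 0 = 0 -> z = 0.
Proof.
rewrite mxE => sum_sq0; apply/rowP => k; rewrite mxE.
have sq_ge0 (i : 'I_n) : true -> 0 <= z 0 i * z^T i 0.
  by rewrite mxE -expr2 sqr_ge0.
have := psumr_eq0P sq_ge0 sum_sq0 (i := k) isT.
by rewrite mxE -expr2 => /eqP; rewrite sqrf_eq0 => /eqP.
Qed.

Lemma sym_span_full_iff D J (S : 'I_J -> 'M[R]_D) :
  (forall j, (S j)^T = S j) ->
  \rank (\matrix_(j < J) mxvec (S j)) = (D * (D + 1) %/ 2)%N <->
  (forall Z : 'M[R]_D, Z^T = Z -> (forall j, \tr (S j *m Z^T) = 0) -> Z = 0).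
Proof.
move=> symS; set C := \matrix_(j < J) mxvec (S j).
have C_sub : (C <= symmx_basis R D)%MS.
  by apply/row_subP => j; rewrite rowK; apply/symmx_basisP.
have orthE (Z : 'M[R]_D) : (forall j, \tr (S j *m Z^T) = 0) <-> C *m (mxvec Z)^T = 0.
  have dotC j : (C *m (mxvec Z)^T) j 0 = \tr (S j *m Z^T).
    by rewrite -mxvec_dot_trace !mxE; apply: eq_bigr => k _; rewrite !mxE.
  split=> [orthZ | /colP CZ0 j]; last by rewrite -dotC CZ0 mxE.
  by apply/colP => j; rewrite dotC orthZ mxE.
rewrite -(mxrank_symmx_basis R D); split=> [rankC Z symZ /orthE CZ0 | orth0].
  have basis_sub : (symmx_basis R D <= C)%MS.
    have /andP[] // : (C == symmx_basis R D)%MS.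
    by rewrite -(mxrank_leqif_eq C_sub).2 rankC.
  have /submxP[w eZ] := submx_trans (introT (symmx_basisP Z) symZ) basis_sub.
  apply/eqP; rewrite -mxvec_eq0; apply/eqP/rV_dot_self_eq0.
  by rewrite {1}eZ -mulmxA CZ0 mulmx0 mxE.
apply/eqP/negPn/negP => rank_neq.
have rank_lt : (\rank C < \rank (symmx_basis R D))%N.
  by rewrite ltn_neqAle rank_neq mxrankS.
have /rowV0Pn[u /sub_kermxP u_ker u_neq0] : kermx (symmx_basis R D *m C^T) != 0.
  rewrite kermx_eq0 /row_free neq_ltn (leq_ltn_trans (mxrankM_maxr _ _)) //.
  by rewrite mxrank_tr -(eqP (symmx_basis_free R D)).
set z := u *m symmx_basis R D.
set Z := vec_mx z.
have symZ : Z^T = Z by apply/symmx_basisP; rewrite vec_mxK submxMl.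
have Z0 : Z = 0.
  apply: orth0 symZ _; apply/orthE.
  by rewrite vec_mxK -[C]trmxK -trmx_mul -mulmxA u_ker trmx0.
move: u_neq0; rewrite -(mulmx_free_eq0 _ (symmx_basis_free R D)) -/z.
by rewrite -[z]vec_mxK -/Z Z0 linear0 eqxx.
Qed.

End SymmetricSpan.

Section PositiveDefinite.
Variable R : rcfType.

Definition posdef n (X : 'M[R]_n) :=
  forall v : 'rV_n, v != 0 -> 0 < (v *m X *m v^T) 0 0.

Lemma posdef_block n (a : 'M[R]_1) (b : 'M_(1, n)) (c : 'M_(n, 1)) (d : 'M_n) :
  posdef (block_mx a b c d) ->
  0 < a 0 0 /\ posdef (d - (a 0 0)^-1 *: (c *m b)).
Proof.
move=> pd; have a_gt0 : 0 < a 0 0.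
  have := pd (row_mx 1%:M 0); rewrite mul_row_block tr_row_mx mul_row_col.
  rewrite !mul0mx !addr0 mul1mx trmx0 mulmx0 addr0 trmx1 mulmx1; apply.
  apply/eqP => /rowP/(_ (lshift n 0)); rewrite row_mxEl !mxE /=.
  by move/eqP; rewrite oner_eq0.
split=> // w w_neq0; set al := a 0 0.
(* [u] cancels the cross term, leaving the Schur complement form in [w]. *)
pose u : 'M_1 := - (al^-1 *: (w *m c)).
have ua : u *m a = - (w *m c).
  by rewrite [a]mx11_scalar mul_mx_scalar scalerN scalerA mulfV ?gt_eqF // scale1r.
have := pd (row_mx u w).
rewrite mul_row_block tr_row_mx mul_row_col ua addNr mul0mx add0r.
have -> : (u *m b + w *m d) *m w^T = w *m (d - al^-1 *: (c *m b)) *m w^T.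
  rewrite mulmxBr mulmxDl mulmxBl addrC; congr (_ + _).
  by rewrite !mulNmx; congr (- _); rewrite -scalemxAr -!scalemxAl !mulmxA.
apply; apply: contra w_neq0 => /eqP/rowP uw0; apply/eqP/rowP => k.
by have := uw0 (rshift 1 k); rewrite row_mxEr !mxE.
Qed.

Lemma posdef_gram n (X : 'M[R]_n) : X^T = X -> posdef X ->
  exists2 Q : 'M[R]_n, Q \in unitmx & Q^T *m Q = X.
Proof.
elim: n X => [|n IH] X symX pdX.
  by exists 1%:M; [exact: unitmx1 | apply/matrixP => [[]]].
pose X1 : 'M[R]_(1 + n) := X.
have eX : X1 = block_mx (ulsubmx X1) (ursubmx X1) (dlsubmx X1) (drsubmx X1).
  by rewrite submxK.
move: (ulsubmx X1) (ursubmx X1) (dlsubmx X1) (drsubmx X1) eX => a b c d eX.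
have [_ cb bc symd] : [/\ a^T = a, c^T = b, b^T = c & d^T = d].
  by move: (symX : X1^T = X1); rewrite eX tr_block_mx => /eq_block_mx.
have [al_gt0 pdS] : 0 < a 0 0 /\ posdef (d - (a 0 0)^-1 *: (c *m b)).
  by apply: posdef_block; rewrite -eX.
set al := a 0 0 in al_gt0 pdS; set S := d - _ in pdS.
have symS : S^T = S by rewrite /S linearB /= linearZ /= trmx_mul symd bc cb.
have [Q' unitQ' gramQ'] := IH S symS pdS.
pose sa := Num.sqrt al.
have sa_neq0 : sa != 0 by rewrite sqrtr_eq0 -ltNge.
have sa_sq : sa * sa = al by rewrite -expr2 sqr_sqrtr // ltW.
pose Q : 'M_(1 + n) := block_mx sa%:M (sa^-1 *: b) 0 Q'.
exists Q.
  have detQ : \det Q = sa * \det Q' by rewrite det_ublock det_scalar expr1.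
  by rewrite unitmxE; move: detQ => /= ->; rewrite unitrM unitfE sa_neq0 -unitmxE.
change (Q^T *m Q = X1); rewrite eX tr_block_mx mulmx_block.
rewrite !trmx0 !mul0mx !mulmx0 !addr0 ?add0r tr_scalar_mx.
congr block_mx.
- by rewrite -scalar_mxM sa_sq [a]mx11_scalar.
- by rewrite mul_scalar_mx scalerA mulfV // scale1r.
- by rewrite mul_mx_scalar linearZ /= scalerA mulfV // scale1r -cb trmxK.
- rewrite gramQ' /S [(_ *: b)^T]linearZ /= -scalemxAl -scalemxAr scalerA -cb trmxK.
  by rewrite -invfM sa_sq addrC subrK.
Qed.

(* With [C] the entrywise l1-norm of [W], [|v W v^T| <= C |v|^2], so that
   [t = 1 / (1 + C)] works. *)
Lemma posdef_id_perturb n (W : 'M[R]_n) :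
  exists2 t : R, 0 < t & posdef (1%:M + t *: W).
Proof.
pose C := \sum_j \sum_i `|W i j|.
have C_ge0 : 0 <= C by apply: sumr_ge0 => j _; apply: sumr_ge0.
have t_gt0 : 0 < (1 + C)^-1 by rewrite invr_gt0 ltr_wpDr.
exists (1 + C)^-1 => // v v_neq0.
pose s := (v *m v^T) 0 0.
have sE : s = \sum_k v 0 k ^+ 2.
  by rewrite /s mxE; apply: eq_bigr => k _; rewrite mxE expr2.
have sq_le_s i : v 0 i ^+ 2 <= s.
  by rewrite sE (bigD1 i) //= lerDl; apply: sumr_ge0 => k _; exact: sqr_ge0.
have s_gt0 : 0 < s.
  rewrite lt_def sE sumr_ge0 ?andbT => [|k _]; last exact: sqr_ge0.
  by apply: contra v_neq0 => /eqP s0; apply/eqP/rV_dot_self_eq0; rewrite -/s sE.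
have abs_mul_le i j : `|v 0 i| * `|v 0 j| <= s.
  have := sq_le_s i; have := sq_le_s j; rewrite -!(real_normK (num_real (v 0 _))).
  have := normr_ge0 (v 0 i); have := normr_ge0 (v 0 j).
  set x := `|v 0 i|; set y := `|v 0 j|; nra.
have form_le : `|(v *m W *m v^T) 0 0| <= C * s.
  rewrite mxE /C mulr_suml; apply: le_trans (ler_norm_sum _ _ _) _.
  apply: ler_sum => j _; rewrite mxE normrM.
  apply: le_trans (ler_wpM2r (normr_ge0 _) (ler_norm_sum _ _ _)) _.
  rewrite !mulr_suml; apply: ler_sum => i _; rewrite mxE normrM.
  by rewrite [_ * `|W i j|]mulrC -mulrA ler_wpM2l.
move: form_le; set x := (v *m W *m v^T) 0 0; rewrite ler_norml => /andP[x_ge _].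
set t := (1 + C)^-1 in t_gt0 *.
have tC : t * (1 + C) = 1 by rewrite mulVf // gt_eqF // ltr_wpDr.
have -> : (v *m (1%:M + t *: W) *m v^T) 0 0 = s + t * x.
  by rewrite mulmxDr mulmx1 -scalemxAr mulmxDl -scalemxAl [LHS]mxE [X in _ + X]mxE.
have : 0 <= t * (x + C * s) by apply: mulr_ge0; [exact: ltW | lra].
have : s = t * s + t * C * s.
  by transitivity (t * (1 + C) * s); [rewrite tC mul1r | ring].
have : 0 < t * s by apply: mulr_gt0.
lra.
Qed.

Lemma gram_perturb n (Q0 Y : 'M[R]_n) : Q0 \in unitmx -> Y^T = Y ->
  exists2 t : R, 0 < t & exists2 Q, Q \in unitmx & Q^T *m Q = Q0^T *m Q0 + t *: Y.
Proof.
move=> unitQ0 symY; pose W := invmx Q0^T *m Y *m invmx Q0.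
have symW : W^T = W by rewrite /W !trmx_mul !trmx_inv trmxK symY mulmxA.
have [t t_gt0 pdX] := posdef_id_perturb W.
have symX : (1%:M + t *: W)^T = 1%:M + t *: W.
  by rewrite linearD /= linearZ /= symW trmx1.
have [Q1 unitQ1 gramQ1] := posdef_gram symX pdX.
exists t => //; exists (Q1 *m Q0); first by rewrite unitmx_mul unitQ1.
rewrite trmx_mul -mulmxA [Q1^T *m _]mulmxA gramQ1 mulmxDl mul1mx -scalemxAl.
rewrite mulmxDr -scalemxAr /W !mulmxA mulmxV ?unitmx_tr // mul1mx.
by rewrite -mulmxA mulVmx // mulmx1.
Qed.

End PositiveDefinite.

Section GramConstraints.
Variables (R : realType) (D n J : nat) (N : 'M[R]_(D, n)).
Variable theta : 'I_J -> 'I_n * 'I_n.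

Definition gram_form (Y : 'M[R]_D) (j : 'I_J) : R :=
  (N^T *m Y *m N) (theta j).1 (theta j).2.

Lemma gram_formE (Q : 'M[R]_D) j :
  ((Q *m N)^T *m (Q *m N)) (theta j).1 (theta j).2 = gram_form (Q^T *m Q) j.
Proof. by rewrite /gram_form trmx_mul !mulmxA. Qed.

Lemma gram_formB Y1 Y2 j : gram_form (Y1 - Y2) j = gram_form Y1 j - gram_form Y2 j.
Proof. by rewrite /gram_form mulmxBr mulmxBl [LHS]mxE [X in _ + X]mxE. Qed.

Lemma gram_formDZ Y1 Y2 t j :
  gram_form (Y1 + t *: Y2) j = gram_form Y1 j + t * gram_form Y2 j.
Proof. by rewrite /gram_form mulmxDr mulmxDl -scalemxAr -scalemxAl !mxE. Qed.

Lemma gram_unique_iff (c : 'I_J -> R) (Q0 : 'M[R]_D) : Q0 \in unitmx ->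
  (forall j, gram_form (Q0^T *m Q0) j = c j) ->
  (forall Q, Q \in unitmx -> (forall j, gram_form (Q^T *m Q) j = c j) ->
     Q^T *m Q = Q0^T *m Q0) <->
  (forall Y, Y^T = Y -> (forall j, gram_form Y j = 0) -> Y = 0).
Proof.
move=> unitQ0 Q0c; split=> [uniq Y symY Y0 | kernel0 Q unitQ Qc].
  have [t t_gt0 [Q unitQ gramQ]] := gram_perturb unitQ0 symY.
  have Qc j : gram_form (Q^T *m Q) j = c j by rewrite gramQ gram_formDZ Y0 mulr0 addr0.
  move/eqP: (uniq Q unitQ Qc); rewrite gramQ -subr_eq0 addrC addKr scaler_eq0.
  by rewrite gt_eqF //= => /eqP.
apply/eqP; rewrite -subr_eq0; apply/eqP/kernel0 => [|j].
  by rewrite linearB /= !trmx_mul !trmxK.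
by rewrite gram_formB Qc Q0c subrr.
Qed.

Lemma Bmat_tr p : (Bmat N p)^T = Bmat N p.
Proof. by rewrite /Bmat linearZ /= linearD /= !trmx_mul !trmxK addrC. Qed.

Lemma trace_Bmat (Y : 'M[R]_D) j : Y^T = Y ->
  \tr (Bmat N (theta j) *m Y^T) = gram_form Y j.
Proof.
move=> symY; set G := N^T *m Y *m N.
have symG : G^T = G by rewrite /G !trmx_mul trmxK symY mulmxA.
have entry_cols a b : \tr (col a N *m (col b N)^T *m Y^T) = G b a.
  rewrite symY -mulmxA mxtrace_mulC trace_mx11 tr_col -row_mul !mxE.
  by apply: eq_bigr => k _; rewrite !mxE.
rewrite /Bmat -scalemxAl mxtraceZ mulmxDl mxtraceD !entry_cols /gram_form -/G.
have -> : G (theta j).2 (theta j).1 = G (theta j).1 (theta j).2.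
  by rewrite -[in LHS]symG mxE.
by set x := G _ _; field.
Qed.

Lemma vecB_matrix_tr (Rb : 'M[R]_D) :
  (vecB_matrix Rb N theta)^T =
  \matrix_(j < J) mxvec (Rb *m Bmat N (theta j) *m Rb^T).
Proof.
by apply/matrixP => j k; rewrite !mxE !trmx_mul trmxK Bmat_tr mulmxA.
Qed.

Lemma gram_unique_iff_rank (c : 'I_J -> R) (Rb Q0 : 'M[R]_D) :
  Rb \in unitmx -> Q0 \in unitmx ->
  (forall j, gram_form (Q0^T *m Q0) j = c j) ->
  (forall Q, Q \in unitmx -> (forall j, gram_form (Q^T *m Q) j = c j) ->
     Q^T *m Q = Q0^T *m Q0) <->
  \rank (vecB_matrix Rb N theta) = (D * (D + 1) %/ 2)%N.
Proof.
move=> unitRb unitQ0 Q0c.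
rewrite (gram_unique_iff unitQ0 Q0c) -mxrank_tr vecB_matrix_tr.
rewrite sym_span_full_iff => [|j]; last by rewrite !trmx_mul trmxK Bmat_tr mulmxA.
pose cong (Z : 'M[R]_D) := Rb^T *m Z *m Rb.
pose uncong (Y : 'M[R]_D) := invmx Rb^T *m Y *m invmx Rb.
have traceE (Z : 'M[R]_D) j : Z^T = Z ->
    \tr (Rb *m Bmat N (theta j) *m Rb^T *m Z^T) = gram_form (cong Z) j.
  move=> symZ; rewrite -trace_Bmat; last by rewrite !trmx_mul trmxK symZ mulmxA.
  by rewrite !trmx_mul trmxK -!mulmxA mxtrace_mulC -!mulmxA.
have congK : cancel uncong cong.
  move=> Y; rewrite /cong /uncong !mulmxA mulmxV ?unitmx_tr // mul1mx.
  by rewrite -mulmxA mulVmx // mulmx1.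
have uncongK : cancel cong uncong.
  move=> Z; rewrite /cong /uncong !mulmxA mulVmx ?unitmx_tr // mul1mx.
  by rewrite -mulmxA mulmxV // mulmx1.
have symE (Z : 'M[R]_D) : (cong Z)^T = cong Z <-> Z^T = Z.
  split=> [|symZ]; last by rewrite /cong !trmx_mul trmxK symZ mulmxA.
  move=> symC; rewrite -(uncongK Z); move: (cong Z) symC => C symC.
  by rewrite /uncong !trmx_mul !trmx_inv trmxK symC mulmxA.
split=> [kernel0 Z symZ orthZ | orth0 Y symY Y0].
  have symCZ : (cong Z)^T = cong Z by apply/symE.
  rewrite -[Z]uncongK (kernel0 _ symCZ) => [|j].
    by rewrite /uncong mulmx0 mul0mx.
  by rewrite -traceE.
have symUY : (uncong Y)^T = uncong Y.
  by apply/(symE (uncong Y)); rewrite (congK Y).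
rewrite -[Y]congK (orth0 _ symUY) => [|j].
  by rewrite /cong mulmx0 mul0mx.
by rewrite traceE // congK.
Qed.

End GramConstraints.

Lemma pick_sharp_mul (R : realType) (D W M : nat) s (X Y : 'M[R]_D)
    (Pst : 'M[R]_(D, W)) (Pm : 'M[R]_(D, M)) :
  pick_sharp s (X *m Pst) (Y *m Pm) = pick_sq s X Y *m pick_sharp s Pst Pm.
Proof. by case: s. Qed.

Lemma compatible_gram_form (R : realType) (D W M J : nat) s
    (theta : 'I_J -> 'I_(dimS s W M) * 'I_(dimS s W M)) (c : 'I_J -> R)
    (P0st : 'M[R]_(D, W)) (P0m : 'M[R]_(D, M)) (A : 'M[R]_D) :
  A \in unitmx ->
  compatible s theta c (P0st^T *m P0m) ((invmx A)^T *m P0st) (A *m P0m) <->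
  (forall j, gram_form (pick_sharp s P0st P0m) theta
               ((pick_sq s (invmx A)^T A)^T *m pick_sq s (invmx A)^T A) j = c j).
Proof.
move=> unitA; rewrite /compatible pick_sharp_mul trmx_mul trmxK -mulmxA.
rewrite (mulmxA (invmx A)) mulVmx // mul1mx.
by split=> [[_ Pc] j | Pc]; [rewrite -gram_formE | split=> // j; rewrite gram_formE].
Qed.

(* The two Gram matrices are inverse to each other. *)
Lemma gram_invtr_eq (R : fieldType) n (A B : 'M[R]_n) :
  A \in unitmx -> B \in unitmx ->
  ((invmx A)^T)^T *m (invmx A)^T = ((invmx B)^T)^T *m (invmx B)^T <->
  A^T *m A = B^T *m B.
Proof.
have gram_inv (C : 'M[R]_n) : C \in unitmx ->
    ((invmx C)^T)^T *m (invmx C)^T *m (C^T *m C) = 1%:M.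
  move=> unitC; rewrite trmxK mulmxA -(mulmxA (invmx C)) -trmx_mul.
  by rewrite mulmxV // trmx1 mulmx1 mulVmx.
move=> unitA unitB; have GA := gram_inv _ unitA; have GB := gram_inv _ unitB.
split=> E.
  by rewrite -[A^T *m A]mulmx1 -GB -E mulmxA (mulmx1C GA) mul1mx.
by rewrite -[LHS]mulmx1 -(mulmx1C GB) -E mulmxA GA mul1mx.
Qed.

Lemma gram_pick_unique (R : realType) (D : nat) s (P : 'M[R]_D -> Prop)
    (A : 'M[R]_D) :
  A \in unitmx ->
  (forall A', A' \in unitmx -> P (pick_sq s (invmx A')^T A') ->
     A'^T *m A' = A^T *m A) <->
  (forall Q, Q \in unitmx -> P Q ->
     Q^T *m Q = (pick_sq s (invmx A)^T A)^T *m pick_sq s (invmx A)^T A).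
Proof.
case: s => //= unitA; split=> [uniq Q unitQ PQ | uniq A' unitA' PA'].
  have unitA' : (invmx Q)^T \in unitmx by rewrite unitmx_tr unitmx_inv.
  have invtrK : (invmx (invmx Q)^T)^T = Q by rewrite trmx_inv trmxK invmxK.
  have := uniq _ unitA'; rewrite invtrK => /(_ PQ).
  by rewrite -gram_invtr_eq // invtrK.
apply/gram_invtr_eq => //; apply: uniq => //.
by rewrite unitmx_tr unitmx_inv.
Qed.

Theorem lemma3 (R : realType) (D W V K : nat)
  (hD : (0 < D)%N) (hW : (0 < W)%N) (hV : (0 < V)%N) (hK : (0 < K)%N)
  (Dm : 'M[R]_(W, V * K)) (hrank : \rank Dm = D)
  (fI : 'I_D -> 'I_W) (fL : 'I_D -> 'I_(V * K))
  (hfI : {homo fI : i j / (i < j)%N}) (hfL : {homo fL : i j / (i < j)%N})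
  (hsq : \rank (mxsub fI fL Dm) = D)
  (s : sharp) (J : nat)
  (theta : 'I_J -> 'I_(dimS s W (V * K)) * 'I_(dimS s W (V * K)))
  (c : 'I_J -> R)
  (P0st : 'M[R]_(D, W)) (P0m : 'M[R]_(D, V * K))
  (hP0 : P0st^T *m P0m = Dm)
  (Pst : 'M[R]_(D, W)) (Pm : 'M[R]_(D, V * K))
  (hP : compatible s theta c Dm Pst Pm)
  (A : 'M[R]_D) (hA : A \in unitmx)
  (hPst : Pst = (invmx A)^T *m P0st) (hPm : Pm = A *m P0m) :
  let R0st := colsub fI P0st in
  let R0m := colsub fL P0m in
  (forall A' : 'M[R]_D, A' \in unitmx ->
     compatible s theta c Dm ((invmx A')^T *m P0st) (A' *m P0m) ->
     A'^T *m A' = A^T *m A)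
  <->
  \rank (vecB_matrix (pick_sq (sharp_bar s) R0st R0m)
                     (pick_sharp s P0st P0m) theta)
  = (D * (D + 1) %/ 2)%N.
Proof.
move=> R0st R0m.
have unitR0 : R0st^T *m R0m \in unitmx.
  have -> : R0st^T *m R0m = mxsub fI fL Dm.
    by rewrite -hP0 mxsub_mul; congr (_ *m _); apply/matrixP => i j; rewrite !mxE.
  by rewrite -row_free_unit /row_free hsq.
have unitRb : pick_sq (sharp_bar s) R0st R0m \in unitmx.
  by move: unitR0; rewrite unitmx_mul unitmx_tr => /andP[]; case: (s).
have unitQ0 : pick_sq s (invmx A)^T A \in unitmx.
  by case: (s) => //=; rewrite unitmx_tr unitmx_inv.
subst Dm Pst Pm.
have compatE A' : A' \in unitmx -> _ <-> _ :=
  compatible_gram_form theta c P0st P0m (A := A').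
rewrite -(gram_unique_iff_rank unitRb unitQ0); last exact/compatE.
rewrite -gram_pick_unique //.
by split=> uniq A' unitA' /(compatE A' unitA') Pc; apply: uniq => //; apply/compatE.
Qed.
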